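(* Let $G$ be a graph of order $n$ and let $uv$ be an edge of $\Lambda(G)$. Then there exist at least $n-3$ odd pairs of $G$ whose first component is $\{u,v\}$.
   Context: All graphs are simple and finite. For a graph $G$ and disjoint $X, Y \subseteq V(G)$, $E(X,Y)$ denotes the set of edges with one endpoint in $X$ and the other in $Y$. An ordered pair $(X,Y)$ of disjoint subsets of $V(G)$ with $|X|=|Y|=2$ is an odd pair of $G$ if $|E(X,Y)|$ is odd. A $2$-subset $\{u,v\}\subseteq V(G)$ is an odd set if it is the first component of some odd pair of $G$. The graph $\Lambda(G)$ has vertex set $V(G)$, and $uv$ is an edge of $\Lambda(G)$ iff $\{u,v\}$ is an odd set of $G$. *)

From mathcomp Require Import all_boot.
Set Implicit Arguments. Unset Strict Implicit. Unset Printing Implicit Defensive.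

Definition simple_graph (T : finType) (e : rel T) : Prop :=
  symmetric e /\ irreflexive e.

(* |E(X,Y)|: number of edges with one endpoint in X and the other in Y.
   For disjoint X, Y each such edge corresponds to exactly one ordered pair
   (x, y) with x in X, y in Y. *)
Definition nedges (T : finType) (e : rel T) (X Y : {set T}) : nat :=
  #|[set p : T * T | (p.1 \in X) && (p.2 \in Y) && e p.1 p.2]|.

Definition odd_pair (T : finType) (e : rel T) (X Y : {set T}) : bool :=
  [&& [disjoint X & Y], #|X| == 2, #|Y| == 2 & odd (nedges e X Y)].

Definition odd_set (T : finType) (e : rel T) (X : {set T}) : bool :=
  [exists Y : {set T}, odd_pair e X Y].

Definition Lambda (T : finType) (e : rel T) : rel T :=
  fun u v => (u != v) && odd_set e [set u; v].

From mathcomp Require Import all_boot zify.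

Set Implicit Arguments.
Unset Strict Implicit.
Unset Printing Implicit Defensive.

(* Write X = {u, v} and colour each vertex w outside X by the parity of its
   number of neighbours in X.  A pair (X, {x, y}) with x, y outside X is odd
   exactly when x and y get different colours.  As uv is an edge of Lambda(G),
   both colours occur among the n - 2 vertices outside X; if the colour classes
   have sizes p, q >= 1, there are pq >= p + q - 1 = n - 3 odd pairs. *)

Lemma big_set2 (R : Type) (idx : R) (op : Monoid.com_law idx)
    (T : finType) (a b : T) (F : T -> R) :
  a != b -> \big[op/idx]_(x in [set a; b]) F x = op (F a) (F b).
Proof. by move=> ab; rewrite big_setU1 ?big_set1 ?inE. Qed.

Lemma set2_mem_disjoint (T : finType) (C D : {set T}) (c s t : T) :
  [disjoint C & D] -> c \in C -> t \in D -> c \in [set s; t] -> c = s.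
Proof.
move=> CD cC tD; rewrite !inE => /orP[/eqP // | /eqP ct].
by move: (disjointFr CD cC); rewrite ct tD.
Qed.

Lemma card_imset_set2 (T : finType) (A B : {set T}) :
  [disjoint A & B] -> #|[set [set p.1; p.2] | p in setX A B]| = #|A| * #|B|.
Proof.
move=> AB; rewrite -cardsX; apply: card_in_imset.
move=> [x y] [x' y'] /setXP[xA yB] /setXP[x'A y'B] /= xy_eq.
have BA : [disjoint B & A] by rewrite disjoint_sym.
congr (_, _).
- by apply: set2_mem_disjoint AB xA y'B _; rewrite -xy_eq set21.
- by apply: set2_mem_disjoint BA yB x'A _; rewrite setUC -xy_eq set22.
Qed.

Lemma setID_disjoint (T : finType) (Z P : {set T}) : [disjoint Z :&: P & Z :\: P].
Proof.
by rewrite disjoints_subset; apply/subsetP => x /setIP[_ xP]; rewrite in_setC in_setD xP.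
Qed.

Lemma setID_gt0 (T : finType) (Z P : {set T}) (a b : T) :
  a \in Z -> b \in Z -> (a \in P) != (b \in P) ->
  0 < #|Z :&: P| /\ 0 < #|Z :\: P|.
Proof.
move=> aZ bZ; case aP: (a \in P); case bP: (b \in P) => // _.
all: split; apply/card_gt0P.
- by exists a; rewrite !inE aP aZ.
- by exists b; rewrite !inE bP bZ.
- by exists b; rewrite !inE bP bZ.
- by exists a; rewrite !inE aP aZ.
Qed.

Section OddPairs.

Variables (T : finType) (e : rel T).

Lemma nedgesE (X Y : {set T}) :
  nedges e X Y = \sum_(x in X) \sum_(y in Y) e x y.
Proof.
rewrite /nedges -sum1_card pair_big_dep /=.
rewrite [LHS]big_mkcond [RHS]big_mkcond /=; apply: eq_bigr => p _.
by rewrite inE; case: (p.1 \in X) (p.2 \in Y) (e p.1 p.2) => [] [] [].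
Qed.

Definition nbr_parity (u v w : T) : bool := odd (e u w + e v w).

Lemma odd_pair_set2 (u v a b : T) : u != v -> a != b ->
  odd_pair e [set u; v] [set a; b] =
  ([set a; b] \subset ~: [set u; v]) && (nbr_parity u v a != nbr_parity u v b).
Proof.
move=> uv ab; rewrite /odd_pair disjoint_sym disjoints_subset !cards2 uv ab /=.
by rewrite nedgesE !big_set2 //= addnACA oddD negb_eqb.
Qed.

End OddPairs.

Theorem lemma3 (T : finType) (e : rel T) (u v : T) :
  simple_graph e -> Lambda e u v ->
  #|T| - 3 <= #|[set Y : {set T} | odd_pair e [set u; v] Y]|.
Proof.
move=> _ /andP[uv /existsP[Y oddY]].
set Z := ~: [set u; v]; set P := [set w | nbr_parity e u v w].
have /cards2P[a [b [ab Y_ab]]] : #|Y| == 2 by case/and4P: oddY.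
move: oddY; rewrite Y_ab odd_pair_set2 // subUset !sub1set => /andP[/andP[aZ bZ] fab].
have [A0 B0] : 0 < #|Z :&: P| /\ 0 < #|Z :\: P|.
  by apply: setID_gt0 aZ bZ _; rewrite !inE.
have cardZ : #|Z| = #|T| - 2 by rewrite -(cardsC [set u; v]) cards2 uv addKn.
have odd_ZP : [set [set p.1; p.2] | p in setX (Z :&: P) (Z :\: P)] \subset
              [set Y | odd_pair e [set u; v] Y].
  apply/subsetP => _ /imsetP[[x y] /setXP[/setIP[xZ xP] /setDP[yZ yP]] ->].
  have xy : x != y by apply: contraNneq yP => <-.
  rewrite inE odd_pair_set2 // subUset !sub1set xZ yZ /=.
  by move: xP yP; rewrite !inE => -> /negbTE ->.
apply: leq_trans (subset_leq_card odd_ZP).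
rewrite card_imset_set2 ?setID_disjoint //; have := cardsID P Z; nia.
Qed.
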